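(* Let $\Gamma_M$ ($M>0$) be a family of nonatomic routing games with a single OD pair with demand $M$, sharing the same graph, path set and edge costs $(c_e)_{e\in\mathcal E}$, where each $c_e$ is a polynomial. Then $\mathrm{PoA}(\Gamma_M)\to 1$ as $M\to \infty$.
   Context: A nonatomic routing game with a single OD pair consists of a finite directed multigraph with edge set $\mathcal E$, a nonempty finite set $\mathcal P$ of paths from an origin to a destination, a demand $M>0$, and continuous nondecreasing edge costs $c_e:[0,\infty)\to[0,\infty)$. Feasible flows: $f\in\mathbb R_+^{\mathcal P}$ with $\sum_p f_p=M$; loads $x_e=\sum_{p\ni e}f_p$; path costs $c_p(f)=\sum_{e\in p}c_e(x_e)$. A Wardrop equilibrium is a feasible $f^*$ with $c_p(f^* )\le c_{p'}(f^* )$ whenever $f^*_p>0$. Social cost $L(x)=\sum_e x_ec_e(x_e)$; $\mathrm{Opt}$ is its minimum over feasible loads, $\mathrm{Eq}=L(x^* )$ at an equilibrium load, and $\mathrm{PoA}=\mathrm{Eq}/\mathrm{Opt}$; it is assumed that $\mathrm{Opt}>0$ (otherwise $\mathrm{PoA}:=1$). *)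

From HB Require Import structures.
From mathcomp Require Import all_boot all_order all_algebra.
From mathcomp Require Import all_classical all_reals all_analysis.
Set Implicit Arguments. Unset Strict Implicit. Unset Printing Implicit Defensive.
Import Order.TTheory GRing.Theory Num.Theory.
Local Open Scope ring_scope.

(** Directed multigraph: vertex type [V], edge type [E], each edge [e]
    goes from [tl e] to [hd e]. *)
Definition is_od_path (V E : eqType) (tl hd : E -> V) (o d : V) (s : seq E) : bool :=
  match s with
  | [::] => false
  | e :: s' =>
      [&& tl e == o, path (fun a b => hd a == tl b) e s',
          hd (last e s') == d & uniq s]
  end.

Section Routing.
Variables (R : realType) (E P : finType).
Variable pth : P -> seq E.
Variable c : E -> {poly R}.

Definition feasible (M : R) (f : P -> R) : Prop :=
  (forall p, 0 <= f p) /\ \sum_(p : P) f p = M.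

Definition load (f : P -> R) (e : E) : R := \sum_(p : P | e \in pth p) f p.

Definition path_cost (f : P -> R) (p : P) : R :=
  \sum_(e <- pth p) (c e).[load f e].

Definition wardrop (M : R) (f : P -> R) : Prop :=
  feasible M f /\ forall p p', 0 < f p -> path_cost f p <= path_cost f p'.

Definition social_cost (x : E -> R) : R := \sum_(e : E) x e * (c e).[x e].

Definition Opt (M : R) : R :=
  inf [set social_cost (load f) | f in feasible M].

(** PoA with respect to a given equilibrium flow [feq]: Eq / Opt,
    with the convention PoA := 1 when Opt = 0. *)
Definition PoA (M : R) (feq : P -> R) : R :=
  if 0 < Opt M then social_cost (load feq) / Opt M else 1.
End Routing.

From HB Require Import structures.
From mathcomp Require Import all_boot all_order all_algebra.
From mathcomp Require Import all_classical all_reals all_analysis.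
From mathcomp Require Import ring lra.
Set Implicit Arguments. Unset Strict Implicit. Unset Printing Implicit Defensive.
Import Order.TTheory GRing.Theory Num.Theory.
Import numFieldNormedType.Exports.
Local Open Scope classical_set_scope.
Local Open Scope ring_scope.

(* Minimise, over the paths, the largest degree of an edge cost along the
   path.  If some path has only zero costs, Eq = Opt = 0.  Otherwise let K be
   this min-max degree: every path has an edge of degree >= K, and some path q
   has only edges of degree <= K.  Some path carries at least M / |P|, so
   Opt >= g M^(K+1) for some g > 0.  At equilibrium no used path is costlier
   than q, so every edge cost is O(M^K); for such loads y and any loads
   x <= M the per-edge exchange inequality
   (K+1) x c(y) <= K y c(y) + x c(x) + eta M^(K+1) holds for large M, whatever
   eta > 0.  Summed over the edges, with x the loads of any feasible flow f,
   and combined with the variational inequality Eq <= sum_e x_e c_e(y_e), it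
   gives Eq <= L(f) + |E| eta M^(K+1), which is at most (1 + eps) L(f) for eta
   small. *)

Section PolyGrowth.
Variable R : realType.
Implicit Types (c : {poly R}) (x y M : R).

Lemma lower_powers_negligible n (b : nat -> R) (eta : R) : 0 < eta ->
  \forall M \near +oo, \sum_(i < n) b i * M ^+ i <= eta * M ^+ n.
Proof.
move=> eta0; case: n b => [|n] b.
  by near=> M; rewrite big_ord0 expr0 mulr1 ltW.
pose B := \sum_(i < n.+1) `|b i|.
near=> M.
have M1 : 1 <= M by near: M; apply: nbhs_pinfty_ge; rewrite num_real.
have MB : B / eta <= M by near: M; apply: nbhs_pinfty_ge; rewrite num_real.
have M0 : 0 <= M := le_trans ler01 M1.
apply: (@le_trans _ _ (B * M ^+ n)).
  rewrite /B big_distrl /=; apply: ler_sum => i _.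
  apply: (le_trans (ler_norm _)); rewrite normrM (ger0_norm (exprn_ge0 _ M0)).
  by apply: ler_wpM2l => //; apply: ler_weXn2l => //; rewrite -ltnS.
rewrite exprS mulrA; apply: ler_wpM2r; first exact: exprn_ge0.
by rewrite mulrC -ler_pdivrMr.
Unshelve. all: by end_near.
Qed.

Lemma horner_lead_split c k x : size c = k.+1 ->
  c.[x] = \sum_(i < k) c`_i * x ^+ i + lead_coef c * x ^+ k.
Proof. by move=> sc; rewrite horner_coef sc big_ord_recr /= lead_coefE sc. Qed.

Lemma sum_pow_norm_le n (b : nat -> R) x M : 0 <= x <= M ->
  `|\sum_(i < n) b i * x ^+ i| <= \sum_(i < n) `|b i| * M ^+ i.
Proof.
move=> /andP[x0 xM]; apply: (le_trans (ler_norm_sum _ _ _)); apply: ler_sum => i _.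
rewrite normrM (ger0_norm (exprn_ge0 _ x0)); apply: ler_wpM2l => //.
by rewrite lerXn2r // nnegrE (le_trans x0).
Qed.

Lemma horner_le_pow c K M : (size c <= K.+1)%N -> 1 <= M ->
  c.[M] <= (\sum_(i < K.+1) `|c`_i|) * M ^+ K.
Proof.
move=> sc M1; have M0 : 0 <= M := le_trans ler01 M1.
have MM : 0 <= M <= M by rewrite M0 lexx.
rewrite (horner_coef_wide _ sc).
apply: le_trans (ler_norm _) (le_trans (sum_pow_norm_le _ _ MM) _).
rewrite big_distrl /=; apply: ler_sum => i _; apply: ler_wpM2l => //.
by apply: ler_weXn2l => //; rewrite -ltnS.
Qed.

Lemma young_pow x y K : 0 <= x -> 0 <= y ->
  K.+1%:R * x * y ^+ K <= K%:R * y ^+ K.+1 + x ^+ K.+1.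
Proof.
move=> x0 y0.
(* x^(K+1) - y^(K+1) - (K+1) y^K (x - y) is the sum over i <= K of
   (x - y) y^i (x^(K-i) - y^(K-i)), whose terms are nonnegative. *)
have -> : K%:R * y ^+ K.+1 + x ^+ K.+1 =
    K.+1%:R * x * y ^+ K + ((x ^+ K.+1 - y ^+ K.+1) - K.+1%:R * y ^+ K * (x - y)).
  by rewrite !exprS -addn1 natrD; ring.
rewrite lerDl subrXX /=.
have -> : K.+1%:R * y ^+ K * (x - y) = \sum_(i < K.+1) (x - y) * y ^+ K.
  by rewrite sumr_const card_ord -mulrA mulr_natl mulrC.
rewrite big_distrr /= -sumrB; apply: sumr_ge0 => i _.
have iK : (i <= K)%N by rewrite -ltnS.
rewrite -mulrBr.
have -> : x ^+ (K - i) * y ^+ i - y ^+ K = y ^+ i * (x ^+ (K - i) - y ^+ (K - i)).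
  by rewrite mulrBr -exprD addnC subnK // mulrC.
rewrite mulrCA; apply: mulr_ge0; first exact: exprn_ge0.
have [xy|yx] := lerP x y.
  by apply: mulr_le0; rewrite subr_le0 // lerXn2r ?nnegrE.
by apply: mulr_ge0; rewrite subr_ge0 ?lerXn2r ?nnegrE // ltW.
Qed.

Lemma nonneg_poly_lead_coef_ge0 c : (forall x, 0 <= x -> 0 <= c.[x]) ->
  0 <= lead_coef c.
Proof.
move=> c_ge0; rewrite leNgt; apply/negP => a_lt0.
have [k sc] : exists k, size c = k.+1.
  by exists (size c).-1; rewrite prednK // size_poly_gt0 -lead_coef_eq0 lt_eqF.
have eta0 : 0 < - lead_coef c / 2 by rewrite divr_gt0 // oppr_gt0.
have [M [M0 HM]] := filter_ex (filterI (nbhs_pinfty_gt (num_real 0))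
  (lower_powers_negligible k (fun i => c`_i) eta0)).
have := c_ge0 M (ltW M0); rewrite (horner_lead_split _ sc).
have : 0 < M ^+ k by apply: exprn_gt0.
by move: HM; set S := \sum_(i < k) _; set Mk := M ^+ k; nra.
Qed.

Lemma nonneg_poly_lead_coef_gt0 c : (forall x, 0 <= x -> 0 <= c.[x]) ->
  c != 0 -> 0 < lead_coef c.
Proof.
by move=> c_ge0 c0; rewrite lt_def lead_coef_eq0 c0 nonneg_poly_lead_coef_ge0.
Qed.

End PolyGrowth.

Section ExchangeBound.
Variables (R : realType) (c : {poly R}).
Hypothesis c_ge0 : forall x, 0 <= x -> 0 <= c.[x].
Hypothesis c_mono : forall x y, 0 <= x -> x <= y -> c.[x] <= c.[y].

Lemma poly_ge_pow_near K s : (K < size c)%N -> 0 < s ->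
  exists2 a, 0 < a &
    \forall M \near +oo, forall x, s * M <= x -> a * M ^+ K <= c.[x].
Proof.
move=> sc s0; set k := (size c).-1.
have sck : size c = k.+1 by rewrite /k prednK // (leq_ltn_trans _ sc).
have lc0 : 0 < lead_coef c.
  by apply: nonneg_poly_lead_coef_gt0; rewrite // -size_poly_gt0 sck.
pose a := lead_coef c / 2 * s ^+ k.
have a0 : 0 < a by rewrite mulr_gt0 ?exprn_gt0 ?divr_gt0.
exists a => //.
have low := lower_powers_negligible k (fun i => - (c`_i * s ^+ i)) a0.
near=> M => x sMx.
have M1 : 1 <= M by near: M; apply: nbhs_pinfty_ge; rewrite num_real.
have HM : \sum_(i < k) - (c`_i * s ^+ i) * M ^+ i <= a * M ^+ k by near: M.
have sM0 : 0 <= s * M by rewrite mulr_ge0 ?ltW // (lt_le_trans ltr01).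
apply: le_trans (c_mono sM0 sMx); rewrite (horner_lead_split _ sck).
have -> : \sum_(i < k) c`_i * (s * M) ^+ i =
    - \sum_(i < k) - (c`_i * s ^+ i) * M ^+ i.
  by rewrite -sumrN; apply: eq_bigr => i _; rewrite mulNr opprK exprMn mulrA.
have lead_eq : lead_coef c * (s * M) ^+ k = 2 * (a * M ^+ k).
  by rewrite /a exprMn; field.
have : a * M ^+ K <= a * M ^+ k.
  by rewrite ler_pM2l // ler_weXn2l // -ltnS -sck.
by rewrite lead_eq; lra.
Unshelve. all: by end_near.
Qed.

Definition exchange_bound (K : nat) (G eta M : R) : Prop :=
  forall x y, 0 <= x <= M -> 0 <= y <= M -> c.[y] <= G * M ^+ K ->
    K.+1%:R * (x * c.[y]) <= K%:R * (y * c.[y]) + x * c.[x] + eta * M ^+ K.+1.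

Lemma exchange_bound_low K G eta : (size c <= K)%N -> 0 < eta ->
  \forall M \near +oo, exchange_bound K G eta M.
Proof.
move=> sc eta0.
have := lower_powers_negligible K (fun i => K.+1%:R * c`_i) eta0.
apply: filterS => M HM x y /andP[x0 xM] /andP[y0 yM] _.
have M0 : 0 <= M := le_trans x0 xM.
have cM : K.+1%:R * c.[M] <= eta * M ^+ K.
  by rewrite (horner_coef_wide _ sc) mulr_sumr; under eq_bigr do rewrite mulrA.
have xcy : K.+1%:R * (x * c.[y]) <= M * (eta * M ^+ K).
  apply: le_trans (_ : K.+1%:R * (M * c.[M]) <= _).
    by rewrite ler_pM2l // ler_pM // ?c_ge0 // c_mono.
  by rewrite mulrCA; apply: ler_wpM2l.
have : 0 <= K%:R * (y * c.[y]) by rewrite !mulr_ge0 // c_ge0.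
have : 0 <= x * c.[x] by rewrite mulr_ge0 // c_ge0.
by rewrite exprS mulrCA; lra.
Qed.

Lemma exchange_bound_high K G eta : (K.+1 < size c)%N -> 0 <= G -> 0 < eta ->
  \forall M \near +oo, exchange_bound K G eta M.
Proof.
move=> sc G0 eta0.
pose th := eta / (K.+1%:R * (G + 1)).
have th0 : 0 < th by rewrite divr_gt0 // mulr_gt0 //; lra.
have [a a0 Ha] := poly_ge_pow_near sc th0.
near=> M => x y /andP[x0 xM] /andP[y0 yM] cyG.
have M1 : 1 <= M by near: M; apply: nbhs_pinfty_ge; rewrite num_real.
have M0 : 0 <= M := le_trans ler01 M1.
have MK0 : 0 <= M ^+ K by rewrite exprn_ge0.
have cy0 := c_ge0 y0.
have : 0 <= K%:R * (y * c.[y]) by rewrite !mulr_ge0.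
(* Either x <= th M is too small to matter, or c(x) >= c(th M) outgrows
   (K+1) c(y) = O(M^K) since deg c > K. *)
have [xth|thx] := lerP x (th * M).
- have thG : K.+1%:R * th * G <= eta.
    have -> : K.+1%:R * th * G = eta * (G / (G + 1)).
      rewrite /th; field.
      by rewrite [1 + _]addrC natr1 pnatr_eq0 /= andbT; apply: lt0r_neq0; lra.
    by rewrite ger_pMr // ler_pdivrMr; lra.
  have : K.+1%:R * (x * c.[y]) <= (K.+1%:R * th * G) * M ^+ K.+1.
    have -> : K.+1%:R * th * G * M ^+ K.+1 = K.+1%:R * ((th * M) * (G * M ^+ K)).
      by rewrite exprS; ring.
    by rewrite ler_wpM2l // ler_pM ?mulr_ge0.
  have : (K.+1%:R * th * G) * M ^+ K.+1 <= eta * M ^+ K.+1.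
    by rewrite ler_wpM2r ?exprn_ge0.
  have : 0 <= x * c.[x] by rewrite mulr_ge0 // c_ge0.
  lra.
- have aMG : K.+1%:R * G * M ^+ K <= a * M ^+ K.+1.
    have MG : K.+1%:R * G / a <= M.
      by near: M; apply: nbhs_pinfty_ge; rewrite num_real.
    by rewrite exprS mulrA ler_wpM2r // [a * M]mulrC -ler_pdivrMr.
  have cx : K.+1%:R * c.[y] <= c.[x].
    apply: le_trans (_ : K.+1%:R * G * M ^+ K <= _); first by rewrite -mulrA ler_wpM2l.
    have HaM : forall z, th * M <= z -> a * M ^+ K.+1 <= c.[z] by near: M.
    by apply: le_trans aMG (HaM _ (ltW thx)).
  have : x * (K.+1%:R * c.[y]) <= x * c.[x] by rewrite ler_wpM2l.
  have : 0 <= eta * M ^+ K.+1 by rewrite mulr_ge0 ?exprn_ge0 ?ltW.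
  by rewrite mulrCA; lra.
Unshelve. all: by end_near.
Qed.

Lemma exchange_bound_eq K G eta : size c = K.+1 -> 0 < eta ->
  \forall M \near +oo, exchange_bound K G eta M.
Proof.
move=> sc eta0.
have := lower_powers_negligible K (fun i => (K.+1 + K.+1)%:R * `|c`_i|) eta0.
apply: filterS => M HM x y xM yM _.
have [[x0 _] [y0 _]] := (andP xM, andP yM).
have M0 : 0 <= M by case/andP: xM => /le_trans; apply.
pose r t := \sum_(i < K) c`_i * t ^+ i.
pose B := \sum_(i < K) `|c`_i| * M ^+ i.
have rB s t : 0 <= s <= M -> 0 <= t <= M -> `|s * r t| <= M * B.
  move=> /andP[s0 sM] tM; rewrite normrM ger0_norm //.
  by rewrite ler_pM // sum_pow_norm_le.
have B_eta : (K.+1 + K.+1)%:R * B <= eta * M ^+ K.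
  by rewrite /B mulr_sumr; under eq_bigr do rewrite mulrA.
have x_ry : x * r y <= M * B := le_trans (ler_norm _) (rB _ _ xM yM).
have y_ry : - (y * r y) <= M * B.
  by apply: le_trans (rB _ _ yM yM); rewrite -normrN ler_norm.
have x_rx : - (x * r x) <= M * B.
  by apply: le_trans (rB _ _ xM xM); rewrite -normrN ler_norm.
have young := ler_wpM2l (nonneg_poly_lead_coef_ge0 c_ge0) (young_pow K x0 y0).
have K_x_ry : K.+1%:R * (x * r y) <= K.+1%:R * (M * B) by rewrite ler_wpM2l.
have K_y_ry : K%:R * - (y * r y) <= K%:R * (M * B) by rewrite ler_wpM2l.
have M_B : M * ((K.+1 + K.+1)%:R * B) <= M * (eta * M ^+ K) by rewrite ler_wpM2l.
rewrite !(horner_lead_split _ sc) -/(r x) -/(r y).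
move: young K_x_ry K_y_ry M_B; rewrite !exprS natrD -natr1; lra.
Qed.

Lemma exchange_bound_near K G eta : 0 <= G -> 0 < eta ->
  \forall M \near +oo, exchange_bound K G eta M.
Proof.
move=> G0 eta0; case: (ltngtP (size c) K.+1) => sc.
- exact: exchange_bound_low.
- exact: exchange_bound_high.
- exact: exchange_bound_eq.
Qed.

End ExchangeBound.

Section Routing.
Variables (R : realType) (E P : finType) (pth : P -> seq E) (c : E -> {poly R}).
Hypothesis pth_uniq : forall p, uniq (pth p).
Hypothesis c_ge0 : forall e x, 0 <= x -> 0 <= (c e).[x].
Hypothesis c_mono : forall e x y, 0 <= x -> x <= y -> (c e).[x] <= (c e).[y].
Implicit Types (f fs : P -> R) (M : R).

Lemma load_ge0 f e : (forall p, 0 <= f p) -> 0 <= load pth f e.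
Proof. by move=> f0; apply: sumr_ge0. Qed.

Lemma load_ge_flow f p e : (forall p, 0 <= f p) -> e \in pth p ->
  f p <= load pth f e.
Proof. by move=> f0 ep; rewrite /load (bigD1 p) //= lerDl sumr_ge0. Qed.

Lemma load_le_demand M f e : feasible M f -> load pth f e <= M.
Proof.
move=> [f0 <-]; rewrite /load [X in _ <= X](bigID (fun p => e \in pth p)) /=.
by rewrite lerDl sumr_ge0.
Qed.

Lemma edge_cost_le_social_cost f e : (forall p, 0 <= f p) ->
  load pth f e * (c e).[load pth f e] <= social_cost c (load pth f).
Proof.
move=> f0; rewrite /social_cost (bigD1 e) //= lerDl.
by apply: sumr_ge0 => e' _; rewrite mulr_ge0 ?c_ge0 ?load_ge0.
Qed.

Lemma social_cost_ge0 f : (forall p, 0 <= f p) -> 0 <= social_cost c (load pth f).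
Proof.
by move=> f0; apply: sumr_ge0 => e _; rewrite mulr_ge0 ?c_ge0 ?load_ge0.
Qed.

Lemma sum_load_mul f (F : E -> R) :
  \sum_e load pth f e * F e = \sum_p f p * \sum_(e <- pth p) F e.
Proof.
under eq_bigr do rewrite /load big_distrl /=.
rewrite (exchange_big_dep predT) //=; apply: eq_bigr => p _.
by rewrite big_distrr /= big_uniq.
Qed.

Lemma social_cost_paths f :
  social_cost c (load pth f) = \sum_p f p * path_cost pth c f p.
Proof. exact: sum_load_mul. Qed.

Lemma wardrop_social_cost_le M fs q : wardrop pth c M fs ->
  social_cost c (load pth fs) <= M * path_cost pth c fs q.
Proof.
move=> [[fs0 <-] fs_eq]; rewrite social_cost_paths mulr_suml.
apply: ler_sum => p _; have [fp0|] := ltrP 0 (fs p).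
  by rewrite ler_wpM2l ?fs_eq ?ltW.
by rewrite le_eqVlt ltNge fs0 orbF => /eqP ->; rewrite !mul0r.
Qed.

Lemma wardrop_variational M fs f : 0 < M -> wardrop pth c M fs -> feasible M f ->
  social_cost c (load pth fs) <= \sum_e load pth f e * (c e).[load pth fs e].
Proof.
move=> M0 fs_eq [f0 fM].
have [p fp0] : exists p, 0 < fs p.
  apply/not_existsP => fs_le0; move: M0; case: fs_eq => -[_ <-] _.
  by apply/negP; rewrite -leNgt sumr_le0 // => p _; rewrite leNgt; apply/negP/fs_le0.
apply: le_trans (wardrop_social_cost_le p fs_eq) _.
rewrite sum_load_mul -fM mulr_suml; apply: ler_sum => p' _.
by rewrite ler_wpM2l //; case: fs_eq => _; apply.
Qed.

Lemma wardrop_edge_cost_le M fs q e : wardrop pth c M fs ->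
  (c e).[load pth fs e] <= (c e).[0] + \sum_(e' <- pth q) (c e').[M].
Proof.
move=> fs_eq; have [[fs0 fsM] fs_min] := fs_eq.
have [|xe_pos] := lerP (load pth fs e) 0.
  move=> xe_le0; have -> : load pth fs e = 0 by apply/eqP; rewrite eq_le xe_le0 load_ge0.
  rewrite lerDl; apply: sumr_ge0 => e' _; rewrite c_ge0 //.
  by rewrite -fsM sumr_ge0.
have [p [fp0 ep]] : exists p, 0 < fs p /\ e \in pth p.
  apply/not_existsP => no_path; move: xe_pos; apply/negP; rewrite -leNgt.
  by apply: sumr_le0 => p ep; rewrite leNgt; apply/negP => fp0; apply: (no_path p).
apply: le_trans (_ : path_cost pth c fs q <= _).
  apply: le_trans (fs_min p q fp0).
  rewrite /path_cost (big_rem e ep) /= lerDl sumr_ge0 // => e' _.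
  by rewrite c_ge0 ?load_ge0.
rewrite -[X in X <= _]add0r lerD ?c_ge0 //.
by apply: ler_sum => e' _; rewrite c_mono ?load_ge0 ?(load_le_demand _ (conj fs0 fsM)).
Qed.

Lemma feasible_flow_ge_avg M f : (0 < #|P|)%N -> feasible M f ->
  exists p, M / #|P|%:R <= f p.
Proof.
move=> P0 [f0 <-]; have [p0 _] := card_gt0P P0.
have [p _ p_max] := @arg_maxP _ _ _ p0 xpredT f isT.
exists p; rewrite ler_pdivrMr ?ltr0n //.
by rewrite mulr_natr -sumr_const; apply: ler_sum => p' _; apply: p_max.
Qed.

Lemma Opt_le_social_cost M f : feasible M f -> Opt pth c M <= social_cost c (load pth f).
Proof.
move=> hf; apply: ge_inf; last by exists f.
by exists 0 => _ [g [g0 _] <-]; apply: social_cost_ge0.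
Qed.

Lemma lb_le_Opt M f b : feasible M f ->
  (forall g, feasible M g -> b <= social_cost c (load pth g)) -> b <= Opt pth c M.
Proof.
move=> hf lb; apply: lb_le_inf; first by exists (social_cost c (load pth f)), f.
by move=> _ [g hg <-]; apply: lb.
Qed.

End Routing.

Lemma minmax_path (E P : finType) (pth : P -> seq E) (w : E -> nat) :
    (0 < #|P|)%N ->
  exists q n, (forall e, e \in pth q -> (w e <= n)%N) /\
    (forall p, (0 < n)%N -> exists2 e, e \in pth p & (n <= w e)%N).
Proof.
move=> /card_gt0P[p0 _]; pose wmax p := (\max_(e <- pth p) w e)%N.
have [q _ q_min] := arg_minnP wmax (isT : xpredT p0).
exists q, (wmax q); split=> [e eq|p n0]; first exact: leq_bigmax_seq.
apply/hasP; apply: contraT => /hasPn small.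
have : (wmax p <= (wmax q).-1)%N.
  by apply/bigmax_leqP_seq => e ep _; rewrite -ltnS prednK // ltnNge small.
by move/(leq_trans (q_min p isT)); rewrite leqNgt ltn_predL n0.
Qed.

Section HighCongestion.
Variables (R : realType) (E P : finType) (pth : P -> seq E) (c : E -> {poly R}).
Hypothesis pth_uniq : forall p, uniq (pth p).
Hypothesis c_ge0 : forall e x, 0 <= x -> 0 <= (c e).[x].
Hypothesis c_mono : forall e x y, 0 <= x -> x <= y -> (c e).[x] <= (c e).[y].
Hypothesis P_nonempty : (0 < #|P|)%N.
Variable feq : R -> P -> R.
Hypothesis feq_eq : forall M, 0 < M -> wardrop pth c M (feq M).

Lemma PoA_eq1_of_costless_path q M : (forall e, e \in pth q -> c e = 0) -> 0 < M ->
  PoA pth c M (feq M) = 1.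
Proof.
move=> q_free M0; have fs_eq := feq_eq M0.
have Eq_le0 : social_cost c (load pth (feq M)) <= 0.
  apply: le_trans (wardrop_social_cost_le pth_uniq q fs_eq) _.
  by rewrite /path_cost big_seq big1 ?mulr0 // => e /q_free ->; rewrite horner0.
by rewrite /PoA ltNge (le_trans (Opt_le_social_cost pth c_ge0 fs_eq.1) Eq_le0).
Qed.

Lemma social_cost_ge_pow_near K :
    (forall p, exists2 e, e \in pth p & (K < size (c e))%N) ->
  exists2 g, 0 < g & \forall M \near +oo, forall f, feasible M f ->
    g * M ^+ K.+1 <= social_cost c (load pth f).
Proof.
move=> heavy; pose N : R := #|P|%:R.
have N0 : 0 < N by rewrite ltr0n.
have iN0 : 0 < N^-1 by rewrite invr_gt0.
have /choice[a a_spec] : forall e, exists a, 0 < a /\ ((K < size (c e))%N ->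
    \forall M \near +oo, forall x, N^-1 * M <= x -> a * M ^+ K <= (c e).[x]).
  move=> e; have [hs|] := ltnP K (size (c e)); last by exists 1.
  have [a a0 Ha] := poly_ge_pow_near (c_ge0 e) (c_mono e) hs iN0.
  by exists a.
pose amin := \big[Num.min/1]_(e | (K < size (c e))%N) a e.
have amin0 : 0 < amin by apply: lt_bigmin => // e _; case: (a_spec e).
exists (amin / N); first by rewrite divr_gt0.
have : \forall M \near +oo, forall e, (K < size (c e))%N ->
    forall x, N^-1 * M <= x -> a e * M ^+ K <= (c e).[x].
  apply: filter_forall => e; have [hs|hs] := ltnP K (size (c e)).
    by apply: filterS ((a_spec e).2 hs) => M HM _.
  by apply: nearW.
apply: filterS => M lower f hf.
have M0 : 0 <= M by case: hf => f0 <-; apply: sumr_ge0.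
have [p fp] := feasible_flow_ge_avg P_nonempty hf.
have [e ep hs] := heavy p.
have xe : N^-1 * M <= load pth f e.
  by rewrite mulrC; apply: le_trans fp (load_ge_flow hf.1 ep).
apply: le_trans _ (edge_cost_le_social_cost pth c_ge0 e hf.1).
have -> : amin / N * M ^+ K.+1 = (N^-1 * M) * (amin * M ^+ K).
  by rewrite exprS; ring.
apply: ler_pM => //; rewrite ?mulr_ge0 ?exprn_ge0 ?(ltW iN0) ?(ltW amin0) //.
apply: le_trans _ (lower e hs _ xe); rewrite ler_wpM2r ?exprn_ge0 //.
exact: bigmin_le_cond.
Qed.

Lemma eq_cost_le_near K :
    (exists q, forall e, e \in pth q -> (size (c e) <= K.+1)%N) ->
  forall eta, 0 < eta -> \forall M \near +oo, forall f, feasible M f ->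
    social_cost c (load pth (feq M)) <=
      social_cost c (load pth f) + eta * M ^+ K.+1 *+ #|E|.
Proof.
move=> [q light] eta eta0.
pose G0 := \sum_(e' <- pth q) \sum_(i < K.+1) `|(c e')`_i|.
pose G e := (c e).[0] + G0.
have G_ge0 e : 0 <= G e.
  by rewrite addr_ge0 ?c_ge0 // !sumr_ge0 // => *; rewrite sumr_ge0.
have exchange_near :
    \forall M \near +oo, forall e, exchange_bound (c e) K (G e) eta M.
  apply: filter_forall => e.
  exact: filterS (exchange_bound_near (c_ge0 e) (c_mono e) K (G_ge0 e) eta0).
near=> M => f hf.
have M1 : 1 <= M by near: M; apply: nbhs_pinfty_ge; rewrite num_real.
have fs_eq := feq_eq (lt_le_trans ltr01 M1).
set fs := feq M in fs_eq *.
have exchange : forall e, exchange_bound (c e) K (G e) eta M by near: M.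
have cost_fs e : (c e).[load pth fs e] <= G e * M ^+ K.
  apply: le_trans (wardrop_edge_cost_le c_ge0 c_mono q e fs_eq) _.
  rewrite mulrDl lerD ?ler_peMr ?c_ge0 ?exprn_ege1 //.
  rewrite /G0 mulr_suml big_seq [leRHS]big_seq; apply: ler_sum => e' e'q.
  exact: horner_le_pow (light e' e'q) M1.
have bounds g : feasible M g -> forall e, 0 <= load pth g e <= M.
  by move=> hg e; rewrite load_ge0 ?load_le_demand //; case: hg.
have : \sum_e K.+1%:R * (load pth f e * (c e).[load pth fs e]) <=
    \sum_e (K%:R * (load pth fs e * (c e).[load pth fs e]) +
      load pth f e * (c e).[load pth f e] + eta * M ^+ K.+1).
  apply: ler_sum => e _.
  exact: exchange (bounds f hf e) (bounds fs fs_eq.1 e) (cost_fs e).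
rewrite -mulr_sumr !big_split /= -mulr_sumr sumr_const -/(social_cost c _).
have := wardrop_variational pth_uniq (lt_le_trans ltr01 M1) fs_eq hf.
set V := \sum_e _ => Eq_V.
have : K%:R * social_cost c (load pth fs) <= K%:R * V by rewrite ler_wpM2l.
rewrite -!/(social_cost c _) -natr1; lra.
Unshelve. all: by end_near.
Qed.

Lemma PoA_cvg1_of_degrees K :
    (exists q, forall e, e \in pth q -> (size (c e) <= K.+1)%N) ->
    (forall p, exists2 e, e \in pth p & (K < size (c e))%N) ->
  PoA pth c M (feq M) @[M --> +oo] --> (1 : R).
Proof.
move=> light heavy; have [g g0 lower] := social_cost_ge_pow_near heavy.
apply/cvgrPdist_le => eps eps0.
pose eta := eps * g / #|E|.+1%:R.
have eta0 : 0 < eta by rewrite !divr_gt0 ?mulr_gt0.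
have upper := eq_cost_le_near light eta0.
near=> M.
have M0 : 0 < M by near: M; apply: nbhs_pinfty_gt; rewrite num_real.
have [hfs _] := feq_eq M0.
have lowerM : forall f, feasible M f ->
  g * M ^+ K.+1 <= social_cost c (load pth f) by near: M.
have upperM : forall f, feasible M f -> social_cost c (load pth (feq M)) <=
  social_cost c (load pth f) + eta * M ^+ K.+1 *+ #|E| by near: M.
set Eq := social_cost c (load pth (feq M)) in upperM *.
have gM0 : 0 < g * M ^+ K.+1 by rewrite mulr_gt0 ?exprn_gt0.
have Opt_pos : 0 < Opt pth c M := lt_le_trans gM0 (lb_le_Opt hfs lowerM).
have Opt_Eq : Opt pth c M <= Eq := Opt_le_social_cost pth c_ge0 hfs.
have eta_E : eta * M ^+ K.+1 *+ #|E| <= eps * (g * M ^+ K.+1).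
  rewrite -mulrnAl mulrA ler_wpM2r ?exprn_ge0 ?(ltW M0) // /eta -mulr_natr -mulrA.
  by rewrite ger_pMr ?mulr_gt0 // mulrC ler_pdivrMr ?ltr0n // mul1r ler_nat.
have Eq_Opt : Eq <= (1 + eps) * Opt pth c M.
  have eps1 : 0 < 1 + eps by lra.
  rewrite mulrC -ler_pdivrMr //; apply: (lb_le_Opt hfs) => f hf.
  have := ler_wpM2l (ltW eps0) (lowerM f hf).
  by rewrite ler_pdivrMr //; move: (upperM f hf) eta_E; lra.
have r1 : 1 <= Eq / Opt pth c M by rewrite ler_pdivlMr // mul1r.
have r2 : Eq / Opt pth c M <= 1 + eps by rewrite ler_pdivrMr // mulrC.
by rewrite /PoA Opt_pos -/Eq ler_norml; apply/andP; split; lra.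
Unshelve. all: by end_near.
Qed.
End HighCongestion.

Theorem corollary4p9
  (R : realType) (V E P : finType) (tl hd : E -> V) (o d : V)
  (pth : P -> seq E) (c : E -> {poly R})
  (P_nonempty : (0 < #|P|)%N)
  (pth_inj : injective pth)
  (pth_od : forall p, is_od_path tl hd o d (pth p))
  (c_nonneg : forall e (x : R), 0 <= x -> 0 <= (c e).[x])
  (c_mono : forall e (x y : R), 0 <= x -> x <= y -> (c e).[x] <= (c e).[y])
  (feq : R -> P -> R)
  (feq_eq : forall M : R, 0 < M -> wardrop pth c M (feq M)) :
  PoA pth c M (feq M) @[M --> +oo] --> (1 : R).
Proof.
have pth_uniq p : uniq (pth p).
  by move: (pth_od p); case: (pth p) => //= e s /and4P[].
have [q [[|K] [light heavy]]] := minmax_path pth (fun e => size (c e)) P_nonempty.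
  apply: cvg_near_cst; near=> M.
  apply: (PoA_eq1_of_costless_path pth_uniq c_nonneg feq_eq (q := q)).
    by move=> e /light; rewrite leqn0 size_poly_eq0 => /eqP.
  by near: M; apply: nbhs_pinfty_gt; rewrite num_real.
apply: (PoA_cvg1_of_degrees pth_uniq c_nonneg c_mono P_nonempty feq_eq (K := K)).
  by exists q.
by move=> p; apply: heavy.
Unshelve. all: by end_near.
Qed.
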